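(* Let $\mathcal A\in\mathbb R^{n\times p\times l}$ with $n\ge p$, and let $\mathcal A=\mathcal U*\mathcal S*\mathcal V^\top$ be a compact t-SVD of $\mathcal A$. Then $\mathcal P=\mathcal U*\mathcal V^\top$ (the $\mathcal P$-factor of the t-polar decomposition of $\mathcal A$) is an optimal solution of $\max_{\mathcal P\in\mathrm{St}(n,p,l)}\langle\mathcal A,\mathcal P\rangle$.
   Context: Frontal slices $A^{(i)}=\mathcal A(:,:,i)$. The t-product is $\mathcal A*\mathcal B=\operatorname{fold}(\operatorname{bcirc}(\mathcal A)\operatorname{unfold}(\mathcal B))$, where $\operatorname{bcirc}(\mathcal A)$ is the block circulant matrix with $(i,j)$ block $A^{(((i-j)\bmod l)+1)}$, $\operatorname{unfold}$ stacks frontal slices vertically, $\operatorname{fold}$ is its inverse. Transpose: $\mathcal A^\top$ has frontal slices $(A^{(1)})^\top,(A^{(l)})^\top,\dots,(A^{(2)})^\top$. $\mathcal I$ identity tensor. $\mathrm{St}(n,p,l)=\{\mathcal X\in\mathbb R^{n\times p\times l}:\mathcal X^\top*\mathcal X=\mathcal I\}$; a tensor $\mathcal V\in\mathbb R^{p\times p\times l}$ is orthogonal if $\mathcal V^\top*\mathcal V=\mathcal V*\mathcal V^\top=\mathcal I$. $\langle\mathcal A,\mathcal B\rangle=\sum a_{ijk}b_{ijk}$. The DFT $L(\mathcal A)$ has frontal slices $\sum_{j=1}^l\omega^{(k-1)(j-1)}A^{(j)}$, $\omega=e^{-2\pi\mathrm i/l}$. A compact t-SVD of $\mathcal A$ is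 a factorization $\mathcal A=\mathcal U*\mathcal S*\mathcal V^\top$ with $\mathcal U\in\mathrm{St}(n,p,l)$, $\mathcal V\in\mathbb R^{p\times p\times l}$ orthogonal and $\mathcal S\in\mathbb R^{p\times p\times l}$ f-diagonal (every frontal slice diagonal), where, by the paper's convention, the frontal slices of $L(\mathcal S)$ are diagonal with nonnegative real entries. *)

From mathcomp Require Import all_boot all_algebra.
From mathcomp Require Import complex.
From mathcomp Require Import reals trigo.
Set Implicit Arguments.
Unset Strict Implicit.
Unset Printing Implicit Defensive.
Import GRing.Theory Num.Theory.
Local Open Scope ring_scope.

(* A third-order tensor in R^{m x q x l}, given by its l frontal slices.
   Slice index k : 'I_l corresponds to the paper's slice k+1. *)
Definition tensor (R : Type) (m q l : nat) := {ffun 'I_l -> 'M[R]_(m, q)}.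

Lemma ord_pos (l : nat) (i : 'I_l) : (0 < l)%N.
Proof. by apply: leq_ltn_trans (ltn_ord i). Qed.

Definition ord_subm (l : nat) (i j : 'I_l) : 'I_l :=
  Ordinal (ltn_pmod (i + l - j)%N (ord_pos i)).
Definition ord_negm (l : nat) (k : 'I_l) : 'I_l :=
  Ordinal (ltn_pmod (l - k)%N (ord_pos k)).

Section Tensors.
Variable R : realType.

(* t-product: fold(bcirc(A) unfold(B)); the (i,j) block of bcirc(A) is the slice (i-j) mod l *)
Definition tprod (m q r l : nat) (A : tensor R m q l) (B : tensor R q r l)
  : tensor R m r l :=
  [ffun i => \sum_(j < l) A (ord_subm i j) *m B j].

(* t-transpose: slices (A^(1))^T, (A^(l))^T, ..., (A^(2))^T *)
Definition ttr (m q l : nat) (A : tensor R m q l) : tensor R q m l :=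
  [ffun k => (A (ord_negm k))^T].

Definition tid (q l : nat) : tensor R q q l :=
  [ffun k => if (val k == 0)%N then 1%:M else 0].

Definition tinner (m q l : nat) (A B : tensor R m q l) : R :=
  \sum_(k < l) \sum_(i < m) \sum_(j < q) A k i j * B k i j.

Definition tStiefel (n p l : nat) (X : tensor R n p l) : Prop :=
  tprod (ttr X) X = tid p l.

Definition torthogonal (p l : nat) (V : tensor R p p l) : Prop :=
  tprod (ttr V) V = tid p l /\ tprod V (ttr V) = tid p l.

Definition fdiagonal (m q l : nat) (S : tensor R m q l) : Prop :=
  forall k, is_diag_mx (S k).

Definition omega (l : nat) : R[i] :=
  (cos (2 * pi / l%:R) +i* (- sin (2 * pi / l%:R)))%C.

Definition tdft (m q l : nat) (A : tensor R m q l) : {ffun 'I_l -> 'M[R[i]]_(m, q)} :=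
  [ffun k : 'I_l => \sum_(j < l) omega l ^+ (k * j)%N *: map_mx (fun x => x%:C%C) (A j)].

(* Compact t-SVD of A: A = U * S * V^T, U in St(n,p,l), V orthogonal, S f-diagonal,
   and the frontal slices of L(S) are diagonal with nonnegative real entries. *)
Definition compact_tSVD (n p l : nat) (A : tensor R n p l)
  (U : tensor R n p l) (S V : tensor R p p l) : Prop :=
  [/\ tStiefel U, torthogonal V, fdiagonal S,
      (forall k : 'I_l, is_diag_mx (tdft S k) /\
         forall i : 'I_p, 0 <= tdft S k i i)
    & A = tprod (tprod U S) (ttr V)].

End Tensors.

(* The DFT along the third mode turns t-products into slice-wise matrix
   products and t-transposes into conjugate transposes (omega is a primitive
   l-th root of unity), and Parseval gives l <A, P> = sum_k Re tr(A_k^H P_k)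
   for the slices X_k of L(X).  Slice-wise, with A_k = U_k S_k V_k^H, S_k
   diagonal and nonnegative, and P_k^H P_k = 1, one has
   tr(A_k^H U_k V_k^H) = tr S_k and
   2 (tr S_k - Re tr(A_k^H P_k)) = tr(S_k (U_k - P_k V_k)^H (U_k - P_k V_k)) >= 0,
   while U_k V_k^H has orthonormal columns because V_k is unitary. *)

From mathcomp Require Import all_boot all_order all_algebra.
From mathcomp Require Import complex.
From mathcomp Require Import reals trigo.
From mathcomp Require Import ring lra.
Import Order.TTheory GRing.Theory Num.Theory.
Local Open Scope ring_scope.
Set Implicit Arguments.
Unset Strict Implicit.
Unset Printing Implicit Defensive.

Section Omega.
Variables (R : realType) (l : nat).
Hypothesis l_gt0 : (0 < l)%N.
Local Notation w := (omega R l).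
Local Notation theta := (2 * pi / l%:R : R).

Lemma omegaX m : w ^+ m = (cos (m%:R * theta) -i* sin (m%:R * theta))%C.
Proof.
elim: m => [|m IHm]; first by rewrite expr0 mul0r cos0 sin0 oppr0.
rewrite exprS IHm /omega; set t := 2 * pi / _.
rewrite -[m.+1]addn1 natrD mulrDl mul1r cosD sinD.
by apply/eqP; rewrite eq_complex /=; apply/andP; split; apply/eqP; ring.
Qed.

Lemma omega_order : w ^+ l = 1.
Proof.
rewrite omegaX; have -> : l%:R * theta = pi *+ 2.
  by rewrite mulrCA mulfV ?mulr1 ?mulr_natl // pnatr_eq0 -lt0n.
by rewrite cos2pi sin2pi oppr0.
Qed.

Lemma omegaX_neq1 r : (0 < r < l)%N -> w ^+ r != 1.
Proof.
move=> /andP[r_gt0 r_lt_l]; rewrite omegaX; apply/negP => /eqP[cos_eq1 _].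
pose x : R := r%:R * pi / l%:R.
have x_gt0 : 0 < x < pi.
  have l_pos : (0 : R) < l%:R by rewrite ltr0n.
  rewrite divr_gt0 ?mulr_gt0 ?pi_gt0 ?ltr0n //=.
  by rewrite ltr_pdivrMr // mulrC ltr_pM2l ?pi_gt0 // ltr_nat.
have sin_gt0 := sin_gt0_pi x_gt0.
have : cos (x *+ 2) = 1.
  rewrite -cos_eq1 /x mulr2n; congr cos; rewrite -mulr2n -mulr_natr.
  by field; rewrite pnatr_eq0 -lt0n.
rewrite cos_mulr2n cos2sin2 => sin2_eq0.
have /eqP : sin x ^+ 2 = 0 by lra.
by rewrite sqrf_eq0 => /eqP sin0; rewrite sin0 ltxx in sin_gt0.
Qed.

Lemma omega_prim : l.-primitive_root w.
Proof.
rewrite /primitive_root_of_unity l_gt0 /=; apply/forallP => i; rewrite unity_rootE.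
have [->|i1_neq_l] := eqVneq i.+1 l; first by rewrite omega_order !eqxx.
by rewrite (negbTE (omegaX_neq1 _)) //= ltn_neqAle i1_neq_l ltn_ord.
Qed.

Lemma sum_omegaX m : \sum_(k < l) w ^+ (k * m) = if (l %| m)%N then l%:R else 0.
Proof.
have := prim_order_dvd omega_prim m; case: ifP => _ => [/esym/eqP wm1 | wm_neq1].
  rewrite (eq_bigr (fun _ => 1)) ?sumr_const ?card_ord // => k _.
  by rewrite mulnC exprM wm1 expr1n.
have : (w ^+ m - 1) * \sum_(k < l) w ^+ (k * m) = 0.
  under eq_bigr do rewrite mulnC exprM.
  by rewrite -subrX1 -exprM mulnC exprM omega_order expr1n subrr.
by move/eqP; rewrite mulf_eq0 subr_eq0 -wm_neq1 => /eqP.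
Qed.

Lemma omega_conjM : w^*%C * w = 1.
Proof.
apply/eqP; rewrite eq_complex /=; apply/andP; split; apply/eqP; last by ring.
by transitivity (cos theta ^+ 2 + sin theta ^+ 2); [ring | exact: cos2Dsin2].
Qed.

Lemma conj_omegaX a b : (l %| a + b)%N -> (w ^+ a)^*%C = w ^+ b.
Proof.
move=> /eqP l_dvd_ab.
have : (w ^+ a)^*%C * (w ^+ a * w ^+ b) = w ^+ b.
  by rewrite rmorphXn mulrA -exprMn omega_conjM expr1n mul1r.
by rewrite -exprD -[w ^+ (a + b)](prim_expr_mod omega_prim) l_dvd_ab expr0 mulr1.
Qed.

End Omega.

Section ConjTranspose.
Variable R : rcfType.

Definition ctmx m q (M : 'M[R[i]]_(m, q)) : 'M[R[i]]_(q, m) := (map_mx conjc M)^T.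

Lemma ctmxE m q (M : 'M[R[i]]_(m, q)) a b : ctmx M a b = (M b a)^*%C.
Proof. by rewrite !mxE. Qed.

Lemma ctmxK m q (M : 'M[R[i]]_(m, q)) : ctmx (ctmx M) = M.
Proof. by apply/matrixP => a b; rewrite !ctmxE conjcK. Qed.

Lemma ctmxM m q r (M : 'M[R[i]]_(m, q)) (N : 'M_(q, r)) :
  ctmx (M *m N) = ctmx N *m ctmx M.
Proof. by rewrite /ctmx map_mxM trmx_mul. Qed.

Lemma ctmx1 m : ctmx (1%:M : 'M[R[i]]_m) = 1%:M.
Proof. by rewrite /ctmx map_mx1 trmx1. Qed.

Lemma ctmxB m q (M N : 'M[R[i]]_(m, q)) : ctmx (M - N) = ctmx M - ctmx N.
Proof. by apply/matrixP => a b; rewrite !(ctmxE, mxE) rmorphB. Qed.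

Lemma ctmxZ m q c (M : 'M[R[i]]_(m, q)) : ctmx (c *: M) = c^*%C *: ctmx M.
Proof. by apply/matrixP => a b; rewrite !(ctmxE, mxE) rmorphM. Qed.

Lemma ctmx_sum m q I (r : seq I) (F : I -> 'M[R[i]]_(m, q)) :
  ctmx (\sum_(k <- r) F k) = \sum_(k <- r) ctmx (F k).
Proof.
apply/matrixP => a b; rewrite ctmxE !summxE rmorph_sum.
by apply: eq_bigr => k _; rewrite ctmxE.
Qed.

Lemma ctmx_real m q (M : 'M[R]_(m, q)) :
  ctmx (map_mx (real_complex R) M) = map_mx (real_complex R) M^T.
Proof. by apply/matrixP => a b; rewrite !(ctmxE, mxE) conjc_real. Qed.

Lemma mxtrace_ctmx m (M : 'M[R[i]]_m) : \tr (ctmx M) = (\tr M)^*%C.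
Proof. by rewrite mxtrace_tr trace_map_mx. Qed.

Lemma ctmx_nneg_diag m (S : 'M[R[i]]_m) :
  is_diag_mx S -> (forall a, 0 <= S a a) -> ctmx S = S.
Proof.
move=> /is_diag_mxP S_diag S_ge0; apply/matrixP => a b; rewrite ctmxE.
have [<-|ba] := eqVneq b a; last by rewrite !S_diag ?conjc0 // eq_sym.
move: (S_ge0 b); case: (S b b) => x y.
by rewrite lecE /= => /andP[/eqP-> _]; rewrite oppr0.
Qed.

Lemma mxtrace_nneg_diag_mul_gram m q (S : 'M[R[i]]_q) (Z : 'M_(m, q)) :
  is_diag_mx S -> (forall a, 0 <= S a a) -> 0 <= \tr (S *m (ctmx Z *m Z)).
Proof.
move=> /is_diag_mxP S_diag S_ge0; apply: sumr_ge0 => a _.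
rewrite mxE (bigD1 a) //= big1 ?addr0 => [|b ba]; last by rewrite S_diag ?mul0r 1?eq_sym.
apply: mulr_ge0 => //; rewrite mxE; apply: sumr_ge0 => c _.
by rewrite ctmxE mulrC mulcJ_ge0.
Qed.

Lemma Re_ge0_addcJ (x : R[i]) : 0 <= x + x^*%C -> 0 <= complex.Re x.
Proof. by rewrite addcJ -(rmorph_nat (real_complex R)) -rmorphM ler0c pmulr_rge0. Qed.

End ConjTranspose.

Section PolarSlice.
Variables (R : rcfType) (n p : nat).
Variables (U : 'M[R[i]]_(n, p)) (S V : 'M[R[i]]_p).
Hypotheses (U_isometry : ctmx U *m U = 1%:M) (V_isometry : ctmx V *m V = 1%:M).
Hypotheses (S_diag : is_diag_mx S) (S_ge0 : forall a, 0 <= S a a).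

Lemma mxtrace_svd_dot (B : 'M_(n, p)) :
  \tr (ctmx (U *m S *m ctmx V) *m B) = \tr (S *m (ctmx U *m B *m V)).
Proof.
rewrite !ctmxM ctmxK (ctmx_nneg_diag S_diag S_ge0).
by rewrite -mulmxA mxtrace_mulC !mulmxA.
Qed.

Lemma mxtrace_svd_polar : \tr (ctmx (U *m S *m ctmx V) *m (U *m ctmx V)) = \tr S.
Proof.
by rewrite mxtrace_svd_dot (mulmxA (ctmx U)) U_isometry mul1mx V_isometry mulmx1.
Qed.

Lemma mxtrace_svd_le (P : 'M_(n, p)) : ctmx P *m P = 1%:M ->
  complex.Re (\tr (ctmx (U *m S *m ctmx V) *m P)) <= complex.Re (\tr S).
Proof.
move=> P_isometry; rewrite -subr_ge0 -raddfB /=; apply: Re_ge0_addcJ.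
set Q := ctmx U *m P *m V.
have PV_isometry : ctmx (P *m V) *m (P *m V) = 1%:M.
  by rewrite ctmxM mulmxA -(mulmxA (ctmx V)) P_isometry mulmx1.
have gram : (1%:M - Q) + ctmx (1%:M - Q) = ctmx (U - P *m V) *m (U - P *m V).
  rewrite ctmxB ctmx1 /Q !ctmxM ctmxK ctmxB !mulmxBl !mulmxBr U_isometry.
  by rewrite PV_isometry ctmxM !mulmxA opprB addrA.
have -> : \tr S - \tr (ctmx (U *m S *m ctmx V) *m P) = \tr (S *m (1%:M - Q)).
  by rewrite mxtrace_svd_dot mulmxBr mulmx1 raddfB.
rewrite -mxtrace_ctmx ctmxM (ctmx_nneg_diag S_diag S_ge0) [\tr (_ *m S)]mxtrace_mulC.
by rewrite -mxtraceD -mulmxDr gram mxtrace_nneg_diag_mul_gram.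
Qed.

End PolarSlice.

Lemma polar_isometry (R : rcfType) n p (U : 'M[R[i]]_(n, p)) (V : 'M[R[i]]_p) :
  ctmx U *m U = 1%:M -> V *m ctmx V = 1%:M ->
  ctmx (U *m ctmx V) *m (U *m ctmx V) = 1%:M.
Proof.
move=> U_isometry V_coisometry.
by rewrite ctmxM ctmxK mulmxA -(mulmxA V) U_isometry mulmx1 V_coisometry.
Qed.

Section OrdinalArith.
Variable l : nat.

Definition ord_addm (i j : 'I_l) : 'I_l := Ordinal (ltn_pmod (i + j)%N (ord_pos i)).

Lemma ord_subm_addm (i j : 'I_l) : ord_subm (ord_addm i j) j = i.
Proof.
apply/val_inj => /=; rewrite -addnBA ?(ltnW (ltn_ord j)) // modnDml.
by rewrite -addnA subnKC ?(ltnW (ltn_ord j)) // modnDr modn_small.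
Qed.

Lemma ord_addm_inj (j : 'I_l) : injective (ord_addm ^~ j).
Proof. by move=> i i' eq_ij; rewrite -(ord_subm_addm i j) eq_ij ord_subm_addm. Qed.

Lemma ord_negmK : involutive (@ord_negm l).
Proof.
move=> i; apply/val_inj => /=.
have [->|i_gt0] := posnP i; first by rewrite subn0 modnn subn0 modnn.
have l_gt_i := ltn_ord i.
have li_lt_l : (l - i < l)%N by rewrite ltn_subrL i_gt0 (ltn_trans i_gt0).
by rewrite (modn_small li_lt_l) subKn ?modn_small // ltnW.
Qed.

Lemma ord_negm_inj : injective (@ord_negm l).
Proof. exact: inv_inj ord_negmK. Qed.

Lemma ord_subm0 (z j : 'I_l) : val z = 0%N -> ord_subm z j = ord_negm j.
Proof. by move=> z0; apply/val_inj; rewrite /= z0. Qed.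

Lemma dvdn_addn_negm (i : 'I_l) : (l %| i + ord_negm i)%N.
Proof. by rewrite /dvdn /= modnDmr subnKC ?modnn // ltnW. Qed.

Lemma dvdn_subn_add (j j' : 'I_l) : (l %| l - j' + j)%N = (j == j').
Proof.
have le_j'l := ltnW (ltn_ord j').
rewrite -val_eqE /= addnC addnBA // -eqn_mod_dvd ?(leq_trans le_j'l) ?leq_addl //.
by rewrite modnDr !modn_small.
Qed.

End OrdinalArith.

Section DFT.
Variables (R : realType) (l : nat).
Local Notation w := (omega R l).
Local Notation toC := (map_mx (real_complex R)).

Lemma tdftE m q (A : tensor R m q l) k :
  tdft A k = \sum_(j < l) w ^+ (k * j) *: toC (A j).
Proof. by rewrite ffunE. Qed.

Lemma omegaX_addm (k i j : 'I_l) : w ^+ (k * ord_addm i j) = w ^+ (k * i) * w ^+ (k * j).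
Proof.
have w_prim := omega_prim R (ord_pos k).
rewrite -[LHS](prim_expr_mod w_prim) /= modnMmr.
by rewrite prim_expr_mod // -exprD mulnDr.
Qed.

Lemma tdftM m q r (A : tensor R m q l) (B : tensor R q r l) k :
  tdft (tprod A B) k = tdft A k *m tdft B k.
Proof.
rewrite !tdftE mulmx_suml.
under eq_bigr do rewrite ffunE raddf_sum scaler_sumr.
rewrite exchange_big /=.
under [RHS]eq_bigr do rewrite mulmx_sumr.
rewrite [RHS]exchange_big /=; apply: eq_bigr => j _.
rewrite (reindex_inj (ord_addm_inj (j := j))) /=; apply: eq_bigr => i _.
by rewrite ord_subm_addm map_mxM omegaX_addm -scalemxAl -scalemxAr scalerA.
Qed.

Lemma tdft_ttr m q (A : tensor R m q l) k : tdft (ttr A) k = ctmx (tdft A k).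
Proof.
rewrite !tdftE ctmx_sum (reindex_inj (@ord_negm_inj l)) /=.
apply: eq_bigr => j _; rewrite ffunE ord_negmK ctmxZ ctmx_real.
rewrite (@conj_omegaX R l (ord_pos k) _ (k * ord_negm j)) //.
by rewrite -mulnDr dvdn_mull // dvdn_addn_negm.
Qed.

Lemma tdft_tid q k : tdft (tid R q l) k = 1%:M.
Proof.
rewrite tdftE (bigD1 (Ordinal (ord_pos k))) //= big1 ?addr0 => [|j j_neq0].
  by rewrite ffunE /= muln0 expr0 scale1r map_mx1.
by rewrite ffunE ifN ?map_mx0 ?scaler0.
Qed.

Lemma sum_omegaX_tdft m q (A : tensor R m q l) (j : 'I_l) :
  \sum_(k < l) w ^+ (k * (l - j)) *: tdft A k = l%:R *: toC (A j).
Proof.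
under eq_bigr do rewrite tdftE scaler_sumr.
rewrite exchange_big /=.
have l_gt0 := ord_pos j.
under eq_bigr do (under eq_bigr do rewrite scalerA -exprD -mulnDr;
                  rewrite -scaler_suml sum_omegaX //).
rewrite (bigD1 j) //= big1 ?addr0 => [|j' j'_neq_j].
  by rewrite subnK ?dvdnn // ltnW.
by rewrite dvdn_subn_add (negbTE j'_neq_j) scale0r.
Qed.

Lemma tdft_inj m q (A B : tensor R m q l) : (forall k, tdft A k = tdft B k) -> A = B.
Proof.
move=> eq_AB; apply/ffunP => j.
have l_neq0 : (l%:R : R[i]) != 0 by rewrite pnatr_eq0 -lt0n (ord_pos j).
apply: (map_mx_inj (f := real_complex R)); apply: (scalerI l_neq0).
by rewrite -!sum_omegaX_tdft; apply: eq_bigr => k _; rewrite eq_AB.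
Qed.

Lemma tStiefel_tdftP m q (X : tensor R m q l) :
  tStiefel X <-> forall k, ctmx (tdft X k) *m tdft X k = 1%:M.
Proof.
split=> [XX k | XX]; first by rewrite -tdft_ttr -tdftM XX tdft_tid.
by apply: tdft_inj => k; rewrite tdftM tdft_ttr XX tdft_tid.
Qed.

Lemma tinner_mxtrace (l_gt0 : (0 < l)%N) m q (A B : tensor R m q l) :
  tinner A B = \tr (tprod (ttr A) B (Ordinal l_gt0)).
Proof.
rewrite /tinner ffunE /mxtrace.
under [RHS]eq_bigr do rewrite summxE.
rewrite [RHS]exchange_big /=; apply: eq_bigr => k _.
rewrite ffunE (@ord_subm0 l (Ordinal l_gt0) _ erefl) ord_negmK.
under [RHS]eq_bigr do rewrite mxE.
rewrite [RHS]exchange_big /=; apply: eq_bigr => a _.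
by apply: eq_bigr => b _; rewrite mxE.
Qed.

Lemma tinner_tdft (l_gt0 : (0 < l)%N) m q (A B : tensor R m q l) :
  l%:R * tinner A B = \sum_(k < l) complex.Re (\tr (ctmx (tdft A k) *m tdft B k)).
Proof.
under eq_bigr do rewrite -tdft_ttr -tdftM.
set X := tprod (ttr A) B.
have sum_tdft : \sum_(k < l) tdft X k = l%:R *: toC (X (Ordinal l_gt0)).
  rewrite -sum_omegaX_tdft; apply: eq_bigr => k _.
  by rewrite subn0 mulnC exprM omega_order // expr1n scale1r.
rewrite -!raddf_sum /= sum_tdft mxtraceZ trace_map_mx -tinner_mxtrace.
by rewrite -(rmorph_nat (real_complex R)) -rmorphM.
Qed.

Lemma tinner_le_tdft m q (A B C : tensor R m q l) :
  (forall k, complex.Re (\tr (ctmx (tdft A k) *m tdft C k))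
             <= complex.Re (\tr (ctmx (tdft A k) *m tdft B k))) ->
  tinner A C <= tinner A B.
Proof.
move=> le_AC_AB; have [l0|l_gt0] := posnP l.
  by rewrite /tinner !big1 // => k _; suff: (k < 0)%N by []; rewrite -l0.
have l_pos : (0 : R) < l%:R by rewrite ltr0n.
by rewrite -(ler_pM2l l_pos) !(tinner_tdft l_gt0); apply: ler_sum.
Qed.

End DFT.

Theorem mainTheorem17 (R : realType) (n p l : nat)
  (A : tensor R n p l) (U : tensor R n p l) (S V : tensor R p p l) :
  (p <= n)%N ->
  compact_tSVD A U S V ->
  tStiefel (tprod U (ttr V)) /\
  (forall P : tensor R n p l, tStiefel P -> tinner A P <= tinner A (tprod U (ttr V))).
Proof.
move=> _ [U_stiefel [V_stiefel V_costiefel] _ LS_nneg_diag ->].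
have /tStiefel_tdftP U_iso := U_stiefel.
have /tStiefel_tdftP V_iso := V_stiefel.
have V_coiso k : tdft V k *m ctmx (tdft V k) = 1%:M.
  by rewrite -tdft_ttr -tdftM V_costiefel tdft_tid.
split=> [|P /tStiefel_tdftP P_iso].
  by apply/tStiefel_tdftP => k; rewrite tdftM tdft_ttr polar_isometry.
apply: tinner_le_tdft => k; have [S_diag S_ge0] := LS_nneg_diag k.
rewrite !tdftM !tdft_ttr (mxtrace_svd_polar (U_iso k) (V_iso k) S_diag S_ge0).
exact (mxtrace_svd_le (U_iso k) (V_iso k) S_diag S_ge0 (P_iso k)).
Qed.
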